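(* Let $A\in\mathbb{R}^{n\times n}$ be symmetric with $r:=\mathrm{rank}(A)\ge 1$. Let $\epsilon\ge 0$, and let $S$ be an ordered subset of $r$ elements of $\{1,\dots,n\}$ such that $A[S]$ is a $(1+\epsilon)$-local maximizer for the absolute determinant on the set of $r\times r$ nonsingular principal submatrices of $A$. Let $H\in\mathbb{R}^{n\times n}$ be the matrix that is zero except that its submatrix with row/column indices $S$ equals $A[S]^{-1}$. Then $H$ is a symmetric reflexive generalized inverse of $A$ having at most $r^2$ nonzero entries, and $\|H\|_1\le r^2(1+\epsilon)\|H^r_{opt}\|_1$, where $H^r_{opt}$ is a symmetric reflexive generalized inverse of $A$ of minimum 1-norm.
   Context: $A[S]$ denotes the principal submatrix of $A$ with row/column indices $S$. $\|H\|_1=\sum_{i,j}|H_{ij}|$. A matrix $H$ is a generalized inverse of $A$ if $AHA=A$, and a reflexive generalized inverse if in addition $HAH=H$. For fixed $\epsilon\ge 0$ and an ordered $r$-subset $S$ of $\{1,\dots,n\}$, $A[S]$ is a $(1+\epsilon)$-local maximizer for the absolute determinant on the set of $r\times r$ nonsingular principal submatrices of $A$ if $|\det(A[S])|>0$ and $|\det(A[S])|$ cannot be increased by a factor of more than $1+\epsilon$ by swapping an element of $S$ with one element from its complement. *)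

From mathcomp Require Import all_boot all_order all_algebra.
Set Implicit Arguments. Unset Strict Implicit. Unset Printing Implicit Defensive.
Import Order.TTheory GRing.Theory Num.Theory.
Local Open Scope ring_scope.

Definition psub (R : Type) (n r : nat) (S : 'I_r -> 'I_n) (A : 'M[R]_n) : 'M[R]_r :=
  \matrix_(i < r, j < r) A (S i) (S j).

Definition swap_idx (n r : nat) (S : 'I_r -> 'I_n) (k : 'I_r) (j : 'I_n) : 'I_r -> 'I_n :=
  fun i => if i == k then j else S i.

Definition local_max_absdet (R : realFieldType) (n r : nat) (eps : R)
    (A : 'M[R]_n) (S : 'I_r -> 'I_n) : Prop :=
  0 < `|\det (psub S A)| /\
  forall (k : 'I_r) (j : 'I_n), j \notin codom S ->
    \det (psub (swap_idx S k j) A) != 0 ->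
    `|\det (psub (swap_idx S k j) A)| <= (1 + eps) * `|\det (psub S A)|.

Definition embed (R : nmodType) (n r : nat) (S : 'I_r -> 'I_n) (B : 'M[R]_r) : 'M[R]_n :=
  \matrix_(i < n, j < n) \sum_(k < r) \sum_(l < r) (if (S k == i) && (S l == j) then B k l else 0).

Definition is_ginv (R : pzRingType) (n : nat) (A H : 'M[R]_n) : Prop :=
  A *m H *m A = A.

Definition is_reflexive_ginv (R : pzRingType) (n : nat) (A H : 'M[R]_n) : Prop :=
  is_ginv A H /\ H *m A *m H = H.

Definition is_sym_reflexive_ginv (R : pzRingType) (n : nat) (A H : 'M[R]_n) : Prop :=
  H^T = H /\ is_reflexive_ginv A H.

Definition norm1 (R : numDomainType) (n : nat) (H : 'M[R]_n) : R :=
  \sum_(i < n) \sum_(j < n) `|H i j|.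

Definition nnz (R : nmodType) (n : nat) (H : 'M[R]_n) : nat :=
  #|[set ij : 'I_n * 'I_n | H ij.1 ij.2 != 0]|.

(* Let P select the rows S and B := A[S] = P A P^T.  Since rank A <= r = rank B,
   A = D B D^T with D := A P^T B^-1, whose rows indexed by S form the identity.
   Replacing S_k by i multiplies det A[S] by D_ik^2 (Cramer's rule), so local
   maximality gives D_ik^2 <= 1 + eps.  For every generalized inverse G of A,
   B^-1 = D^T G D, so each entry of B^-1 is at most (1 + eps) |G|_1, and
   H = P^T B^-1 P has |H|_1 <= r^2 (1 + eps) |G|_1. *)

From mathcomp Require Import all_boot all_order all_algebra.
From mathcomp Require Import lra.
Import Order.TTheory GRing.Theory Num.Theory.
Local Open Scope ring_scope.
Set Implicit Arguments. Unset Strict Implicit.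

Definition selmx (R : pzSemiRingType) (n r : nat) (S : 'I_r -> 'I_n) : 'M[R]_(r, n) :=
  rowsub S 1%:M.

Section Selection.
Variables (R : pzSemiRingType) (n r : nat) (S : 'I_r -> 'I_n).

Lemma mul_selmx p (X : 'M[R]_(n, p)) : selmx R S *m X = rowsub S X.
Proof. by rewrite rowsubE. Qed.

Lemma psub_selmx (A : 'M[R]_n) : psub S A = selmx R S *m A *m (selmx R S)^T.
Proof.
apply/matrixP => k l; rewrite mul_selmx !mxE (bigD1 (S l)) //= big1 => [|j /negbTE].
  by rewrite !mxE eqxx mulr1 addr0.
by rewrite !mxE eq_sym => ->; rewrite mulr0.
Qed.

Lemma embed_selmx (X : 'M[R]_r) : embed S X = (selmx R S)^T *m X *m selmx R S.
Proof.
apply/matrixP => i j; rewrite !mxE exchange_big; apply: eq_bigr => l _.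
rewrite !mxE big_distrl; apply: eq_bigr => k _; rewrite !mxE.
by case: (S k == i); case: (S l == j); rewrite /= ?mulr1 ?mulr0 ?mul0r ?mul1r.
Qed.

End Selection.

Lemma minor_factor (F : fieldType) (m n r : nat) (A : 'M[F]_(m, n))
    (P : 'M[F]_(r, m)) (Q : 'M[F]_(n, r)) :
  (\rank A <= r)%N -> P *m A *m Q \in unitmx ->
  A = A *m Q *m invmx (P *m A *m Q) *m P *m A.
Proof.
move=> rkA unitPAQ.
have PA_A : (P *m A <= A)%MS by apply: submxMl.
have rkPA : \rank (P *m A) = \rank A.
  apply/eqP; rewrite eqn_leq mxrankS //=.
  by rewrite (leq_trans rkA) // -{1}(mxrank_unit unitPAQ) mxrankM_maxl.
have /submxP[X defA] : (A <= P *m A)%MS.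
  by rewrite -(geq_leqif (mxrank_leqif_sup PA_A)) rkPA.
have AQ : A *m Q = X *m (P *m A *m Q) by rewrite {1}defA !mulmxA.
by rewrite AQ mulmxK // -mulmxA -defA.
Qed.

Lemma det_selmx_swap (R : comPzRingType) (n r : nat) (S : 'I_r -> 'I_n)
    (D : 'M[R]_(n, r)) (k : 'I_r) (i : 'I_n) :
  selmx R S *m D = 1%:M -> \det (selmx R (swap_idx S k i) *m D) = D i k.
Proof.
rewrite !mul_selmx => /matrixP SD; set M := rowsub _ D.
have M_id m j : m != k -> M m j = (m == j)%:R.
  by move=> /negbTE mk; rewrite mxE /swap_idx mk; have := SD m j; rewrite !mxE.
rewrite (expand_det_col M k) (bigD1 k) //= big1 => [|m mk]; last first.
  by rewrite M_id // (negbTE mk) mul0r.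
have minor_id : row' k (col' k M) = 1%:M.
  apply/matrixP => p q; rewrite 2!mxE M_id; last by rewrite eq_sym neq_lift.
  by rewrite mxE (inj_eq lift_inj).
rewrite /cofactor minor_id det1 mxE /swap_idx eqxx.
by rewrite -signr_odd addnn odd_double !mulr1 addr0.
Qed.

Lemma trmx_psub (T : Type) (n r : nat) (S : 'I_r -> 'I_n) (A : 'M[T]_n) :
  (psub S A)^T = psub S A^T.
Proof. by apply/matrixP => k l; rewrite !mxE. Qed.

Section NonsingularMinor.
Variables (F : fieldType) (n r : nat) (S : 'I_r -> 'I_n) (A : 'M[F]_n).
Hypotheses (rkA : (\rank A <= r)%N) (unitB : psub S A \in unitmx).

Local Notation P := (selmx F S).
Local Notation B := (psub S A).

Definition col_coef : 'M[F]_(n, r) := A *m P^T *m invmx B.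
Definition row_coef : 'M[F]_(r, n) := invmx B *m P *m A.

Lemma selmx_col_coef : P *m col_coef = 1%:M.
Proof. by rewrite /col_coef !mulmxA -psub_selmx mulmxV. Qed.

Lemma row_coef_selmx : row_coef *m P^T = 1%:M.
Proof. by rewrite /row_coef -!mulmxA (mulmxA P) -psub_selmx mulVmx. Qed.

Lemma psub_factor : A = col_coef *m B *m row_coef.
Proof.
rewrite /col_coef /row_coef mulmxKV // !mulmxA psub_selmx -minor_factor //.
by rewrite -psub_selmx.
Qed.

Lemma det_psub_swap k i :
  \det (psub (swap_idx S k i) A) = col_coef i k * row_coef k i * \det B.
Proof.
set T := swap_idx S k i.
have selmx_row_coefT : P *m row_coef^T = 1%:M.
  by rewrite -[P]trmxK -trmx_mul row_coef_selmx trmx1.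
have -> : psub T A = (selmx F T *m col_coef) *m B *m (selmx F T *m row_coef^T)^T.
  by rewrite psub_selmx {1}psub_factor trmx_mul trmxK !mulmxA.
rewrite !det_mulmx det_tr !det_selmx_swap ?selmx_col_coef //.
by rewrite [row_coef^T _ _]mxE mulrAC.
Qed.

Lemma invmx_psub_ginv G : is_ginv A G -> invmx B = row_coef *m G *m col_coef.
Proof.
move=> AGA.
have -> : row_coef *m G *m col_coef = invmx B *m (P *m (A *m G *m A) *m P^T) *m invmx B.
  by rewrite /row_coef /col_coef !mulmxA.
by rewrite AGA -psub_selmx mulVmx ?mul1mx.
Qed.

Lemma embed_invmx_reflexive_ginv : is_reflexive_ginv A (embed S (invmx B)).
Proof.
rewrite /is_reflexive_ginv /is_ginv embed_selmx; split.
  by rewrite !mulmxA psub_selmx -minor_factor // -psub_selmx.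
have -> : P^T *m invmx B *m P *m A *m (P^T *m invmx B *m P) =
          P^T *m invmx B *m (P *m A *m P^T) *m invmx B *m P by rewrite !mulmxA.
by rewrite -psub_selmx mulmxKV.
Qed.

Hypothesis symA : A^T = A.

Lemma row_coef_sym : row_coef = col_coef^T.
Proof.
by rewrite /row_coef /col_coef !trmx_mul trmx_inv trmx_psub symA trmxK mulmxA.
Qed.

Lemma embed_invmx_sym_reflexive_ginv :
  is_sym_reflexive_ginv A (embed S (invmx B)).
Proof.
split; last exact: embed_invmx_reflexive_ginv.
by rewrite embed_selmx !trmx_mul trmxK trmx_inv trmx_psub symA mulmxA.
Qed.
End NonsingularMinor.

Lemma normrM_le_sqr_bound (R : realDomainType) (x y c : R) :
  x ^+ 2 <= c -> y ^+ 2 <= c -> `|x| * `|y| <= c.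
Proof.
rewrite -(real_normK (num_real x)) -(real_normK (num_real y)) => x2c y2c.
have := normr_ge0 x; have := normr_ge0 y; nra.
Qed.

Section LocalMaximizer.
Variables (R : realFieldType) (n r : nat) (S : 'I_r -> 'I_n) (A : 'M[R]_n) (eps : R).
Hypotheses (symA : A^T = A) (rkA : (\rank A <= r)%N) (eps_ge0 : 0 <= eps).
Hypothesis maxS : local_max_absdet eps A S.

Lemma local_max_unitmx : psub S A \in unitmx.
Proof. by rewrite unitmxE unitfE -normr_gt0; case: maxS. Qed.

Lemma col_coef_sqr_le i k : col_coef S A i k ^+ 2 <= 1 + eps.
Proof.
set D := col_coef S A.
have eps1_ge1 : 1 <= 1 + eps by rewrite lerDl.
have eps1_ge0 : 0 <= 1 + eps := le_trans ler01 eps1_ge1.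
have [/codomP[m ->] | iS] := boolP (i \in codom S).
  have := selmx_col_coef local_max_unitmx.
  rewrite mul_selmx => /matrixP/(_ m k); rewrite !mxE => ->.
  by case: (m == k); rewrite ?expr1n ?expr0n.
have [-> | Dik] := eqVneq (D i k) 0; first by rewrite expr0n.
have [detB_gt0 lmax] := maxS.
have := det_psub_swap rkA local_max_unitmx k i.
rewrite row_coef_sym // [_^T _ _]mxE -/D -expr2 => detT.
have := lmax k i iS; rewrite detT normrM ger0_norm ?sqr_ge0 // ler_pM2r //.
by apply; rewrite mulf_neq0 ?expf_neq0 // -normr_gt0.
Qed.

Lemma invmx_psub_entry_le G k l :
  is_ginv A G -> `|invmx (psub S A) k l| <= (1 + eps) * norm1 G.
Proof.
move=> /(invmx_psub_ginv local_max_unitmx) ->; rewrite row_coef_sym //.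
(* D is made opaque, as [mxE] would otherwise unfold [col_coef]. *)
have := col_coef_sqr_le; set D := col_coef S A; clearbody D => D_sqr_le.
rewrite /norm1 mxE exchange_big mulr_sumr.
apply: (le_trans (ler_norm_sum _ _ _)); apply: ler_sum => j _.
rewrite mxE big_distrl mulr_sumr.
apply: (le_trans (ler_norm_sum _ _ _)); apply: ler_sum => i _.
rewrite !mxE !normrM mulrAC ler_wpM2r //.
exact: normrM_le_sqr_bound.
Qed.
End LocalMaximizer.

Lemma nnz_embed_le (R : nmodType) (n r : nat) (S : 'I_r -> 'I_n) (X : 'M[R]_r) :
  (nnz (embed S X) <= r ^ 2)%N.
Proof.
set imS := S @: [set: 'I_r].
have supp : [set ij | embed S X ij.1 ij.2 != 0] \subset setX imS imS.
  apply/subsetP => -[i j]; rewrite !inE /=; apply: contraR => /nandP notS.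
  rewrite mxE big1 // => k _; rewrite big1 // => l _.
  by case: ifP => // /andP[/eqP ki /eqP lj]; case: notS; rewrite -?ki -?lj imset_f.
apply: (leq_trans (subset_leq_card supp)); rewrite cardsX -mulnn.
by apply: leq_mul; rewrite (leq_trans (leq_imset_card _ _)) ?cardsT ?card_ord.
Qed.

Lemma sum_if_eq (R : nmodType) (I : finType) (a : I) (F : I -> R) :
  \sum_i (if a == i then F i else 0) = F a.
Proof. by rewrite -big_mkcond (big_pred1 a) // => i; rewrite /= eq_sym. Qed.

Lemma norm1_embed_le (R : numDomainType) (n r : nat) (S : 'I_r -> 'I_n)
    (X : 'M[R]_r) :
  norm1 (embed S X) <= norm1 X.
Proof.
pose F k l i j : R := if (S k == i) && (S l == j) then `|X k l| else 0.
apply: (@le_trans _ _ (\sum_i \sum_j \sum_k \sum_l F k l i j)).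
  apply: ler_sum => i _; apply: ler_sum => j _; rewrite mxE.
  apply: (le_trans (ler_norm_sum _ _ _)); apply: ler_sum => k _.
  apply: (le_trans (ler_norm_sum _ _ _)); apply: ler_sum => l _.
  by rewrite /F; case: ifP; rewrite ?normr0.
rewrite /norm1 [leRHS]pair_big pair_big; under eq_bigr do rewrite pair_big.
rewrite exchange_big; apply: ler_sum => -[k l] _ /=.
by rewrite (sum_if_eq (S k, S l) (fun _ => `|X k l|)).
Qed.

Lemma norm1_le_entry_bound (R : numDomainType) (r : nat) (X : 'M[R]_r) (c : R) :
  (forall k l, `|X k l| <= c) -> norm1 X <= (r ^ 2)%:R * c.
Proof.
move=> Xc; apply: (@le_trans _ _ (\sum_(k < r) \sum_(l < r) c)).
  by apply: ler_sum => k _; apply: ler_sum => l _.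
by rewrite !sumr_const !card_ord -mulrnA mulnn mulr_natl.
Qed.

Theorem theorem2p6 (R : realFieldType) (n : nat) (A : 'M[R]_n) (eps : R)
    (S : 'I_(\rank A) -> 'I_n) :
  A^T = A -> (1 <= \rank A)%N -> 0 <= eps -> injective S ->
  local_max_absdet eps A S ->
  let H := embed S (invmx (psub S A)) in
  [/\ is_sym_reflexive_ginv A H,
      (nnz H <= \rank A ^ 2)%N &
      forall Hopt : 'M[R]_n,
        is_sym_reflexive_ginv A Hopt ->
        (forall G : 'M[R]_n, is_sym_reflexive_ginv A G -> norm1 Hopt <= norm1 G) ->
        norm1 H <= ((\rank A) ^ 2)%:R * (1 + eps) * norm1 Hopt].
Proof.
move=> symA _ eps_ge0 _ maxS H.
have rkA := leqnn (\rank A).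
split.
- exact: embed_invmx_sym_reflexive_ginv rkA (local_max_unitmx maxS) symA.
- exact: nnz_embed_le.
- move=> Hopt [_ [ginvHopt _]] _.
  apply: le_trans (norm1_embed_le _ _) _.
  rewrite -mulrA; apply: norm1_le_entry_bound => k l.
  exact: invmx_psub_entry_le.
Qed.
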